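(* Consider the heterogeneous agents $\dot x_i=\sum_{j=1}^N\alpha_{ij}(t)(\mathrm{sat}_j(x_j)-\mathrm{sat}_i(x_i))$, $i\in\{1,\dots,N\}$, with $s_1>s_2>\dots>s_N>0$ and time-varying undirected weights satisfying the standing assumptions. Let $k\in\{1,\dots,N\}$ and $\mathcal V_k=\{1,\dots,k\}$. If $x_i(t^* )\in[-s_k,s_k]$ for all $i\in\mathcal V_k$ at some $t^*\ge t_0$, then $x_i(t)\in[-s_k,s_k]$ for all $i\in\mathcal V_k$ and all $t\ge t^*$.
   Context: $\mathrm{sat}_i(x)=\mathrm{sign}(x)\min\{|x|,s_i\}$. Standing assumptions: $\alpha_{ij}(t)=\alpha_{ji}(t)\ge0$, each $\alpha_{ij}$ continuous on $[0,\infty)$ except on a set of measure zero; Carathéodory solutions. *)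

From Stdlib Require Import Reals Lra.
Open Scope R_scope.

Definition sign (x : R) : R :=
  if Rlt_dec 0 x then 1 else if Rlt_dec x 0 then -1 else 0.

Definition sat (s x : R) : R := sign x * Rmin (Rabs x) s.

Fixpoint sumR_upto (n : nat) (f : nat -> R) : R :=
  match n with
  | O => 0
  | S n' => sumR_upto n' f + f n
  end.
(* sumR_upto n f = f 1 + ... + f n *)

Definition negligible (E : R -> Prop) : Prop :=
  forall eps, 0 < eps ->
  exists a b : nat -> R,
    (forall n, a n <= b n) /\
    (forall x, E x -> exists n, a n < x < b n) /\
    (forall M, sum_f_R0 (fun n => b n - a n) M < eps).

(* absolute continuity of f on [a,b]: for n non-overlapping subintervals
   [u 1, v 1], ..., [u n, v n] of [a,b] (in increasing order) *)
Definition abs_continuous_on (f : R -> R) (a b : R) : Prop :=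
  forall eps, 0 < eps -> exists delta, 0 < delta /\
  forall (n : nat) (u v : nat -> R),
    (forall i, (1 <= i <= n)%nat -> a <= u i /\ u i <= v i /\ v i <= b) ->
    (forall i, (1 <= i < n)%nat -> v i <= u (S i)) ->
    sumR_upto n (fun i => v i - u i) < delta ->
    sumR_upto n (fun i => Rabs (f (v i) - f (u i))) < eps.

Definition loc_abs_continuous_from (f : R -> R) (t0 : R) : Prop :=
  forall T, t0 <= T -> abs_continuous_on f t0 T.

Definition standing_weights (N : nat) (alpha : nat -> nat -> R -> R) : Prop :=
  forall i j, (1 <= i <= N)%nat -> (1 <= j <= N)%nat ->
    (forall t, 0 <= t -> alpha i j t = alpha j i t /\ 0 <= alpha i j t) /\
    (exists E, negligible E /\
       forall t, 0 <= t -> ~ E t -> continuity_pt (alpha i j) t).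

Definition cara_solution (N : nat) (s : nat -> R) (alpha : nat -> nat -> R -> R)
  (t0 : R) (x : nat -> R -> R) : Prop :=
  forall i, (1 <= i <= N)%nat ->
    loc_abs_continuous_from (x i) t0 /\
    exists E, negligible E /\
      forall t, t0 < t -> ~ E t ->
        derivable_pt_lim (x i) t
          (sumR_upto N (fun j => alpha i j t *
                                  (sat (s j) (x j t) - sat (s i) (x i t)))).

(* With c = s_k, V(t) = sum_{i<=k} max(x_i(t) - c, 0) is locally absolutely
   continuous, and wherever every x_i satisfies the ODE its one-sided Dini
   derivatives are bounded by the total flux out of a set A of agents with
   x_i >= c. On A the saturated states are >= c; every other agent, including
   each j > k because s_j < c, has saturated state <= c. By symmetry of the
   weights the flux out of A is therefore nonpositive. An absolutely
   continuous function with nonpositive Dini derivatives off a null set is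
   nonincreasing (real induction, with the null set controlled through
   absolute continuity), so V stays 0 after t*. The lower bound is the upper
   one for -x, again a solution because sat is odd. *)

From Stdlib Require Import Bool Reals Lra Lia Classical.
Open Scope R_scope.

Lemma sumR_ext n f g : (forall i, (1 <= i <= n)%nat -> f i = g i) ->
  sumR_upto n f = sumR_upto n g.
Proof.
  induction n as [|n IH]; simpl; intros H; [reflexivity|].
  rewrite IH by (intros; apply H; lia). rewrite H by lia. reflexivity.
Qed.

Lemma sumR_le n f g : (forall i, (1 <= i <= n)%nat -> f i <= g i) ->
  sumR_upto n f <= sumR_upto n g.
Proof.
  induction n as [|n IH]; simpl; intros H; [lra|].
  assert (sumR_upto n f <= sumR_upto n g) by (apply IH; intros; apply H; lia).
  assert (f (S n) <= g (S n)) by (apply H; lia).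
  lra.
Qed.

Lemma sumR_plus n f g :
  sumR_upto n (fun i => f i + g i) = sumR_upto n f + sumR_upto n g.
Proof. induction n as [|n IH]; simpl; [lra|]. rewrite IH. lra. Qed.

Lemma sumR_minus n f g :
  sumR_upto n (fun i => f i - g i) = sumR_upto n f - sumR_upto n g.
Proof. induction n as [|n IH]; simpl; [lra|]. rewrite IH. lra. Qed.

Lemma sumR_scal n c f : sumR_upto n (fun i => c * f i) = c * sumR_upto n f.
Proof. induction n as [|n IH]; simpl; [lra|]. rewrite IH. lra. Qed.

Lemma sumR_const n c : sumR_upto n (fun _ => c) = INR n * c.
Proof.
  induction n as [|n IH]; simpl sumR_upto; [simpl; lra|].
  rewrite IH, S_INR. lra.
Qed.

Lemma sumR_nonpos n f : (forall i, (1 <= i <= n)%nat -> f i <= 0) ->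
  sumR_upto n f <= 0.
Proof.
  intros H. rewrite <- (Rmult_0_r (INR n)), <- sumR_const. now apply sumR_le.
Qed.

Lemma sumR_nonneg n f : (forall i, (1 <= i <= n)%nat -> 0 <= f i) ->
  0 <= sumR_upto n f.
Proof.
  intros H. rewrite <- (Rmult_0_r (INR n)), <- sumR_const. now apply sumR_le.
Qed.

Lemma sumR_term_le n f i : (forall j, (1 <= j <= n)%nat -> 0 <= f j) ->
  (1 <= i <= n)%nat -> f i <= sumR_upto n f.
Proof.
  induction n as [|n IH]; intros H Hi; [lia|]. simpl.
  destruct (Nat.eq_dec i (S n)) as [->|Hne].
  - assert (0 <= sumR_upto n f) by (apply sumR_nonneg; intros; apply H; lia). lra.
  - assert (f i <= sumR_upto n f) by (apply IH; [intros; apply H|]; lia).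
    assert (0 <= f (S n)) by (apply H; lia). lra.
Qed.

Lemma sumR_swap n m (f : nat -> nat -> R) :
  sumR_upto n (fun i => sumR_upto m (fun j => f i j)) =
  sumR_upto m (fun j => sumR_upto n (fun i => f i j)).
Proof.
  induction n as [|n IH]; simpl.
  - rewrite sumR_const. lra.
  - rewrite IH, sumR_plus. reflexivity.
Qed.

Lemma sumR_if (b : bool) n f :
  (if b then sumR_upto n f else 0) = sumR_upto n (fun j => if b then f j else 0).
Proof. destruct b; [reflexivity|]. rewrite sumR_const. lra. Qed.

Lemma sumR_restrict n k f : (k <= n)%nat ->
  sumR_upto n (fun i => if (i <=? k)%nat then f i else 0) = sumR_upto k f.
Proof.
  induction n as [|n IH]; intros Hk.
  - now replace k with 0%nat by lia.
  - destruct (Nat.eq_dec k (S n)) as [->|Hne].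
    + apply sumR_ext. intros i Hi. now rewrite (proj2 (Nat.leb_le i (S n))) by lia.
    + cbn [sumR_upto]. rewrite IH by lia. rewrite (proj2 (Nat.leb_gt (S n) k)) by lia. lra.
Qed.

Lemma decreasing_lt (s : nat -> R) N : (forall i, (1 <= i < N)%nat -> s (S i) < s i) ->
  forall i j, (1 <= i)%nat -> (i < j <= N)%nat -> s j < s i.
Proof.
  intros Hs i j Hi Hj. induction j as [|j IH]; [lia|].
  destruct (Nat.eq_dec i j) as [->|Hne]; [apply Hs; lia|].
  assert (s j < s i) by (apply IH; lia).
  assert (s (S j) < s j) by (apply Hs; lia). lra.
Qed.

Lemma sat_opp s y : sat s (- y) = - sat s y.
Proof.
  unfold sat, sign. rewrite Rabs_Ropp.
  destruct (Rlt_dec 0 (- y)), (Rlt_dec 0 y), (Rlt_dec (- y) 0), (Rlt_dec y 0); lra.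
Qed.

Lemma sat_ge c s y : 0 < c -> c <= s -> c <= y -> c <= sat s y.
Proof.
  intros Hc Hs Hy. unfold sat, sign. destruct (Rlt_dec 0 y); [|lra].
  rewrite Rabs_right by lra. unfold Rmin. destruct (Rle_dec y s); lra.
Qed.

Lemma sat_le c s y : 0 <= c -> 0 <= s -> y <= c -> sat s y <= c.
Proof.
  intros Hc Hs Hy. unfold sat, sign. unfold Rmin.
  destruct (Rlt_dec 0 y); [rewrite Rabs_right by lra; destruct (Rle_dec y s); lra|].
  destruct (Rlt_dec y 0); [|lra].
  destruct (Rle_dec (Rabs y) s); [pose proof (Rabs_pos y)|]; lra.
Qed.

Lemma sat_le_bound s y : 0 <= s -> sat s y <= s.
Proof.
  intros Hs. unfold sat, sign. pose proof (Rmin_r (Rabs y) s).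
  assert (0 <= Rmin (Rabs y) s) by (apply Rmin_glb; [apply Rabs_pos|lra]).
  destruct (Rlt_dec 0 y); [lra|]. destruct (Rlt_dec y 0); lra.
Qed.
(** * Null sets *)

Lemma sum_f_R0_le_mono f m M : (forall n, 0 <= f n) -> (m <= M)%nat ->
  sum_f_R0 f m <= sum_f_R0 f M.
Proof.
  intros Hf Hm. induction M as [|M IH].
  - now replace m with 0%nat by lia.
  - destruct (Nat.eq_dec m (S M)) as [->|Hne]; [lra|].
    simpl. specialize (Hf (S M)). assert (sum_f_R0 f m <= sum_f_R0 f M) by (apply IH; lia). lra.
Qed.

Lemma negligible_subset (E F : R -> Prop) : negligible F -> (forall t, E t -> F t) ->
  negligible E.
Proof.
  intros HF Hsub eps Heps. destruct (HF eps Heps) as (a & b & Hab & Hcov & Hsum).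
  exists a, b. auto.
Qed.

Lemma negligible_empty : negligible (fun _ => False).
Proof.
  intros eps Heps. exists (fun _ => 0), (fun _ => 0). split; [|split].
  - intros; lra.
  - intros y [].
  - intros M. induction M; simpl; lra.
Qed.

Lemma negligible_singleton a : negligible (fun t => t = a).
Proof.
  intros eps Heps.
  exists (fun n => match n with O => a - eps / 4 | S _ => 0 end),
         (fun n => match n with O => a + eps / 4 | S _ => 0 end).
  split; [|split].
  - intros [|n]; lra.
  - intros y ->. exists O. lra.
  - intros M. induction M; simpl in *; lra.
Qed.

Definition interleave (f g : nat -> R) (n : nat) : R :=
  if Nat.even n then f (Nat.div2 n) else g (Nat.div2 n).

Lemma interleave_even f g n : interleave f g (2 * n) = f n.
Proof. unfold interleave. now rewrite Nat.even_mul, Nat.div2_double. Qed.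

Lemma interleave_odd f g n : interleave f g (S (2 * n)) = g n.
Proof.
  unfold interleave. now rewrite Nat.even_succ, Nat.odd_mul, Nat.div2_succ_double.
Qed.

Lemma sum_interleave f g M :
  sum_f_R0 (interleave f g) (S (2 * M)) = sum_f_R0 f M + sum_f_R0 g M.
Proof.
  induction M as [|M IH].
  - simpl. unfold interleave. simpl. reflexivity.
  - replace (S (2 * S M)) with (S (S (S (2 * M)))) by lia.
    rewrite (tech5 _ (S (S (2 * M)))), (tech5 _ (S (2 * M))), IH, (tech5 f), (tech5 g).
    replace (S (S (2 * M))) with (2 * S M)%nat by lia.
    rewrite interleave_even, interleave_odd. lra.
Qed.

Lemma negligible_union (E F : R -> Prop) : negligible E -> negligible F ->
  negligible (fun t => E t \/ F t).
Proof.
  intros HE HF eps Heps.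
  destruct (HE (eps / 2)) as (a1 & b1 & Hab1 & Hcov1 & Hsum1); [lra|].
  destruct (HF (eps / 2)) as (a2 & b2 & Hab2 & Hcov2 & Hsum2); [lra|].
  exists (interleave a1 a2), (interleave b1 b2). split; [|split].
  - intros n. unfold interleave. destruct (Nat.even n); auto.
  - intros y [Hy|Hy].
    + destruct (Hcov1 y Hy) as [n Hn]. exists (2 * n)%nat.
      now rewrite !interleave_even.
    + destruct (Hcov2 y Hy) as [n Hn]. exists (S (2 * n)).
      now rewrite !interleave_odd.
  - intros M.
    assert (Hlen : forall n, interleave b1 b2 n - interleave a1 a2 n =
              interleave (fun n => b1 n - a1 n) (fun n => b2 n - a2 n) n)
      by (intros n; unfold interleave; now destruct (Nat.even n)).
    rewrite (sum_eq _ _ M (fun n _ => Hlen n)).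
    apply Rle_lt_trans with (sum_f_R0 (interleave (fun n => b1 n - a1 n)
                                                    (fun n => b2 n - a2 n)) (S (2 * M))).
    + apply sum_f_R0_le_mono; [|lia].
      intros n. unfold interleave. destruct (Nat.even n);
        [specialize (Hab1 (Nat.div2 n)) | specialize (Hab2 (Nat.div2 n))]; lra.
    + rewrite sum_interleave. specialize (Hsum1 M). specialize (Hsum2 M). lra.
Qed.

(** * Absolute continuity and Dini derivatives *)

Lemma abs_continuous_on_subinterval f a a' b : a <= a' ->
  abs_continuous_on f a b -> abs_continuous_on f a' b.
Proof.
  intros Ha Hf eps Heps. destruct (Hf eps Heps) as (d & Hd & Hvar).
  exists d. split; [exact Hd|]. intros n u v Hin Hord Hlen. apply Hvar; auto.
  intros i Hi. specialize (Hin i Hi). lra.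
Qed.

Lemma abs_continuous_on_zero a b : abs_continuous_on (fun _ => 0) a b.
Proof.
  intros eps Heps. exists 1. split; [lra|]. intros n u v _ _ _.
  rewrite (sumR_ext n _ (fun _ => 0)), sumR_const; [lra|].
  intros. rewrite Rminus_0_r. apply Rabs_R0.
Qed.

Lemma abs_continuous_on_plus f g a b :
  abs_continuous_on f a b -> abs_continuous_on g a b ->
  abs_continuous_on (fun t => f t + g t) a b.
Proof.
  intros Hf Hg eps Heps.
  destruct (Hf (eps / 2)) as (d1 & Hd1 & Hvar1); [lra|].
  destruct (Hg (eps / 2)) as (d2 & Hd2 & Hvar2); [lra|].
  exists (Rmin d1 d2). split; [now apply Rmin_glb_lt|].
  intros n u v Hin Hord Hlen.
  pose proof (Rmin_l d1 d2). pose proof (Rmin_r d1 d2).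
  specialize (Hvar1 n u v Hin Hord ltac:(lra)). specialize (Hvar2 n u v Hin Hord ltac:(lra)).
  eapply Rle_lt_trans.
  - apply sumR_le with (g := fun i => Rabs (f (v i) - f (u i)) + Rabs (g (v i) - g (u i))).
    intros i _. replace (f (v i) + g (v i) - (f (u i) + g (u i)))
      with ((f (v i) - f (u i)) + (g (v i) - g (u i))) by ring.
    apply Rabs_triang.
  - rewrite sumR_plus. lra.
Qed.

Lemma abs_continuous_on_comp_contraction h f a b :
  (forall p q, Rabs (h p - h q) <= Rabs (p - q)) ->
  abs_continuous_on f a b -> abs_continuous_on (fun t => h (f t)) a b.
Proof.
  intros Hh Hf eps Heps. destruct (Hf eps Heps) as (d & Hd & Hvar).
  exists d. split; [exact Hd|]. intros n u v Hin Hord Hlen.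
  eapply Rle_lt_trans; [|exact (Hvar n u v Hin Hord Hlen)].
  apply sumR_le. intros. apply Hh.
Qed.

Lemma abs_continuous_on_opp f a b :
  abs_continuous_on f a b -> abs_continuous_on (fun t => - f t) a b.
Proof.
  apply abs_continuous_on_comp_contraction. intros p q.
  replace (- p - - q) with (- (p - q)) by ring. rewrite Rabs_Ropp. lra.
Qed.

Lemma real_induction (P : R -> Prop) a b : a <= b -> P a ->
  (forall t, a <= t <= b -> exists r, 0 < r /\
     forall u v, a <= u <= t -> t <= v <= b -> t - u < r -> v - t < r -> P u -> P v) ->
  P b.
Proof.
  intros Hab Pa Hstep.
  set (S := fun t => a <= t <= b /\ P t).
  destruct (completeness S) as [m [Hub Hlub]].
  { exists b. intros t [Ht _]. lra. }
  { exists a. split; [lra|exact Pa]. }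
  assert (Ham : a <= m) by (apply Hub; split; [lra|exact Pa]).
  assert (Hmb : m <= b) by (apply Hlub; intros t [Ht _]; lra).
  destruct (Hstep m (conj Ham Hmb)) as (r & Hr & Hext).
  assert (Hnear : exists u, S u /\ m - r < u).
  { apply NNPP. intros Hno. assert (m <= m - r); [|lra].
    apply Hlub. intros t St. apply Rnot_lt_le. intros Hlt. apply Hno. now exists t. }
  destruct Hnear as (u & [Hu Pu] & Hur).
  assert (Hum : u <= m) by (apply Hub; now split).
  assert (Pm : P m) by (apply (Hext u m); auto; lra).
  destruct (Req_dec m b) as [<-|Hne]; [exact Pm|].
  set (v := m + Rmin (r / 2) (b - m)).
  pose proof (Rmin_l (r / 2) (b - m)). pose proof (Rmin_r (r / 2) (b - m)).
  assert (Hpos : 0 < Rmin (r / 2) (b - m)) by (apply Rmin_glb_lt; lra).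
  assert (Sv : S v) by (split; [unfold v; lra|apply (Hext m v); unfold v; auto; lra]).
  assert (v <= m) by (apply Hub; exact Sv).
  unfold v in *. lra.
Qed.

Definition dini_nonpos_off (V : R -> R) (E : R -> Prop) (a b : R) : Prop :=
  forall t, a <= t <= b -> ~ E t -> forall eps, 0 < eps -> exists d, 0 < d /\
    (forall tau, t <= tau < t + d -> V tau - V t <= eps * (tau - t)) /\
    (forall tau, t - d < tau <= t -> V t - V tau <= eps * (t - tau)).

Definition cover_certificate (V : R -> R) (a eps : R) (an bn : nat -> R) (tau : R) :
  Prop :=
  exists m (u v : nat -> R) (idx : nat -> nat),
    (forall i, (1 <= i <= m)%nat ->
       a <= u i <= v i /\ v i <= tau /\ an (idx i) <= u i /\ v i <= bn (idx i)) /\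
    (forall i, (1 <= i < m)%nat -> v i <= u (S i)) /\
    V tau - V a <= eps * (tau - a) + sumR_upto m (fun i => Rabs (V (v i) - V (u i))).

Section CoverCertificate.

Variables (V : R -> R) (a eps : R) (an bn : nat -> R).

Lemma cover_certificate_start : cover_certificate V a eps an bn a.
Proof.
  exists O, (fun _ => 0), (fun _ => 0), (fun _ => O). split; [|split].
  - intros; lia.
  - intros; lia.
  - simpl. lra.
Qed.

Lemma cover_certificate_step t1 t2 : t1 <= t2 -> V t2 - V t1 <= eps * (t2 - t1) ->
  cover_certificate V a eps an bn t1 -> cover_certificate V a eps an bn t2.
Proof.
  intros Ht Hinc (m & u & v & idx & Hin & Hord & Hbound).
  exists m, u, v, idx. split; [|split]; auto.
  - intros i Hi. specialize (Hin i Hi). lra.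
  - lra.
Qed.

Lemma cover_certificate_jump t1 t2 n : 0 <= eps -> a <= t1 <= t2 -> an n <= t1 -> t2 <= bn n ->
  cover_certificate V a eps an bn t1 -> cover_certificate V a eps an bn t2.
Proof.
  intros Heps Ht Hn1 Hn2 (m & u & v & idx & Hin & Hord & Hbound).
  exists (S m), (fun i => if (i =? S m)%nat then t1 else u i),
    (fun i => if (i =? S m)%nat then t2 else v i),
    (fun i => if (i =? S m)%nat then n else idx i).
  split; [|split].
  - intros i Hi. destruct (Nat.eqb_spec i (S m)); [lra|].
    specialize (Hin i ltac:(lia)). lra.
  - intros i Hi. destruct (Nat.eqb_spec i (S m)); [lia|].
    destruct (Nat.eqb_spec (S i) (S m)).
    + replace i with m by lia. specialize (Hin m ltac:(lia)). lra.
    + apply Hord; lia.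
  - cbn [sumR_upto]. rewrite Nat.eqb_refl.
    rewrite (sumR_ext m _ (fun i => Rabs (V (v i) - V (u i)))).
    + pose proof (Rle_abs (V t2 - V t1)).
      assert (eps * (t1 - a) <= eps * (t2 - a)) by (apply Rmult_le_compat_l; lra).
      lra.
    + intros i Hi. destruct (Nat.eqb_spec i (S m)); [lia|reflexivity].
Qed.

Lemma cover_certificate_local E b : dini_nonpos_off V E a b -> 0 < eps ->
  (forall x, E x -> exists n, an n < x < bn n) ->
  forall t, a <= t <= b -> exists r, 0 < r /\
    forall u v, a <= u <= t -> t <= v <= b -> t - u < r -> v - t < r ->
      cover_certificate V a eps an bn u -> cover_certificate V a eps an bn v.
Proof.
  intros Hdini Heps Hcov t Ht. destruct (classic (E t)) as [HE|HE].
  - destruct (Hcov t HE) as [n Hn].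
    exists (Rmin (t - an n) (bn n - t)). split; [apply Rmin_glb_lt; lra|].
    intros u v Hu Hv Hur Hvr.
    pose proof (Rmin_l (t - an n) (bn n - t)). pose proof (Rmin_r (t - an n) (bn n - t)).
    apply cover_certificate_jump with (n := n); auto; lra.
  - destruct (Hdini t Ht HE eps Heps) as (d & Hd & Hright & Hleft).
    exists d. split; [exact Hd|]. intros u v Hu Hv Hur Hvr.
    apply cover_certificate_step; [lra|].
    specialize (Hright v ltac:(lra)). specialize (Hleft u ltac:(lra)). lra.
Qed.

End CoverCertificate.

Lemma ordered_intervals_le m (u v : nat -> R) :
  (forall i, (1 <= i <= m)%nat -> u i <= v i) ->
  (forall i, (1 <= i < m)%nat -> v i <= u (S i)) ->
  forall i j, (1 <= i)%nat -> (i < j <= m)%nat -> v i <= u j.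
Proof.
  intros Huv Hord i j Hi Hj. induction j as [|j IH]; [lia|].
  destruct (Nat.eq_dec i j) as [->|Hne]; [apply Hord; lia|].
  assert (v i <= u j) by (apply IH; lia).
  assert (u j <= v j) by (apply Huv; lia).
  assert (v j <= u (S j)) by (apply Hord; lia). lra.
Qed.

Lemma sumR_selected_lengths_le m (u v : nat -> R) (sel : nat -> bool) A B :
  A <= B ->
  (forall i, (1 <= i <= m)%nat -> u i <= v i) ->
  (forall i, (1 <= i < m)%nat -> v i <= u (S i)) ->
  (forall i, (1 <= i <= m)%nat -> sel i = true -> A <= u i /\ v i <= B) ->
  sumR_upto m (fun i => if sel i then v i - u i else 0) <= B - A.
Proof.
  revert B. induction m as [|m IH]; intros B HAB Huv Hord Hsel; simpl; [lra|].
  assert (Huv' : forall i, (1 <= i <= m)%nat -> u i <= v i) by (intros; apply Huv; lia).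
  assert (Hord' : forall i, (1 <= i < m)%nat -> v i <= u (S i)) by (intros; apply Hord; lia).
  destruct (sel (S m)) eqn:Hlast.
  - destruct (Hsel (S m) ltac:(lia) Hlast) as [HA HB].
    assert (sumR_upto m (fun i => if sel i then v i - u i else 0) <= u (S m) - A); [|lra].
    apply IH; auto. intros i Hi Hseli. split; [apply (Hsel i); auto; lia|].
    apply (ordered_intervals_le (S m) u v Huv Hord); lia.
  - assert (sumR_upto m (fun i => if sel i then v i - u i else 0) <= B - A); [|lra].
    apply IH; auto. intros i Hi. apply Hsel. lia.
Qed.

Lemma sum_f_R0_indicator p c M : (p <= M)%nat ->
  sum_f_R0 (fun n => if (p =? n)%nat then c else 0) M = c.
Proof.
  intros Hp. induction M as [|M IH].
  - now replace p with 0%nat by lia.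
  - rewrite tech5. destruct (Nat.eq_dec p (S M)) as [->|Hne].
    + rewrite Nat.eqb_refl, (sum_eq _ (fun _ => 0)).
      * clear. induction M; simpl in *; lra.
      * intros i Hi. destruct (Nat.eqb_spec (S M) i); [lia|reflexivity].
    + rewrite IH by lia. destruct (Nat.eqb_spec p (S M)); [lia|lra].
Qed.

Lemma sumR_group_by m f (idx : nat -> nat) M :
  (forall i, (1 <= i <= m)%nat -> (idx i <= M)%nat) ->
  sumR_upto m f =
  sum_f_R0 (fun n => sumR_upto m (fun i => if (idx i =? n)%nat then f i else 0)) M.
Proof.
  induction m as [|m IH]; intros Hidx; simpl.
  - clear. induction M; simpl in *; lra.
  - rewrite sum_plus, <- IH by (intros; apply Hidx; lia).
    rewrite sum_f_R0_indicator by (apply Hidx; lia). reflexivity.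
Qed.

Lemma bounded_on_initial_segment m (idx : nat -> nat) :
  exists M, forall i, (1 <= i <= m)%nat -> (idx i <= M)%nat.
Proof.
  induction m as [|m [M HM]]; [exists O; intros; lia|].
  exists (Nat.max M (idx (S m))). intros i Hi.
  destruct (Nat.eq_dec i (S m)) as [->|Hne]; [lia|]. specialize (HM i ltac:(lia)). lia.
Qed.

Lemma sumR_lengths_le_cover m (u v : nat -> R) (idx : nat -> nat) (an bn : nat -> R) :
  (forall n, an n <= bn n) ->
  (forall i, (1 <= i <= m)%nat -> u i <= v i /\ an (idx i) <= u i /\ v i <= bn (idx i)) ->
  (forall i, (1 <= i < m)%nat -> v i <= u (S i)) ->
  exists M, sumR_upto m (fun i => v i - u i) <= sum_f_R0 (fun n => bn n - an n) M.
Proof.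
  intros Hab Hin Hord. destruct (bounded_on_initial_segment m idx) as [M HM].
  exists M. rewrite (sumR_group_by m _ idx M HM).
  apply sum_Rle. intros n _.
  apply sumR_selected_lengths_le; auto.
  - intros i Hi. apply Hin; auto.
  - intros i Hi Hsel. apply Nat.eqb_eq in Hsel. subst n. specialize (Hin i Hi). lra.
Qed.

Lemma increment_le_of_dini_nonpos V E a b eps eps' : a <= b ->
  abs_continuous_on V a b -> negligible E -> dini_nonpos_off V E a b ->
  0 < eps -> 0 < eps' -> V b - V a <= eps * (b - a) + eps'.
Proof.
  intros Hab Hac Hneg Hdini Heps Heps'.
  destruct (Hac eps' Heps') as (d & Hd & Hvar).
  destruct (Hneg d Hd) as (an & bn & Han & Hcov & Hsum).
  assert (Hcert : cover_certificate V a eps an bn b).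
  { apply real_induction with a; auto using cover_certificate_start.
    apply (cover_certificate_local V a eps an bn E b); auto. }
  destruct Hcert as (m & u & v & idx & Hin & Hord & Hinc).
  destruct (sumR_lengths_le_cover m u v idx an bn) as [M HM]; auto.
  { intros i Hi. specialize (Hin i Hi). lra. }
  assert (sumR_upto m (fun i => Rabs (V (v i) - V (u i))) < eps'); [|lra].
  apply Hvar; auto.
  - intros i Hi. specialize (Hin i Hi). lra.
  - specialize (Hsum M). lra.
Qed.

Lemma nonincreasing_of_dini_nonpos V E a b : a <= b ->
  abs_continuous_on V a b -> negligible E -> dini_nonpos_off V E a b -> V b <= V a.
Proof.
  intros Hab Hac Hneg Hdini. apply Rnot_lt_le. intros Hlt.
  set (D := V b - V a).
  set (eps := D / (4 * (b - a + 1))).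
  assert (Heps : 0 < eps) by (unfold eps, D; apply Rdiv_lt_0_compat; lra).
  assert (Hscale : eps * (b - a + 1) = D / 4) by (unfold eps; field; lra).
  pose proof (increment_le_of_dini_nonpos V E a b eps (D / 2) Hab Hac Hneg Hdini Heps
                ltac:(unfold D; lra)).
  assert (eps * (b - a) <= D / 4) by nra.
  unfold D in *. lra.
Qed.

(** * The positive part along a differentiable trajectory *)

Lemma derivable_pt_lim_bounds f t d : derivable_pt_lim f t d -> forall e, 0 < e ->
  exists dl, 0 < dl /\ forall tau, Rabs (tau - t) < dl ->
    f tau - f t <= d * (tau - t) + e * Rabs (tau - t) /\
    f t - f tau <= e * Rabs (tau - t) - d * (tau - t).
Proof.
  intros Hd e He. destruct (Hd e He) as [[dl Hdl] Hquot].
  exists dl. split; [exact Hdl|]. intros tau Htau.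
  destruct (Req_dec tau t) as [->|Hne]; [replace (t - t) with 0 by ring; rewrite Rabs_R0; lra|].
  assert (Hh : tau - t <> 0) by lra.
  specialize (Hquot (tau - t) Hh Htau). replace (t + (tau - t)) with tau in Hquot by ring.
  assert (Hlin : Rabs (f tau - f t - d * (tau - t)) <= e * Rabs (tau - t)).
  { replace (f tau - f t - d * (tau - t))
      with (((f tau - f t) / (tau - t) - d) * (tau - t)) by (field; exact Hh).
    rewrite Rabs_mult. apply Rmult_le_compat_r; [apply Rabs_pos|lra]. }
  pose proof (Rle_abs (f tau - f t - d * (tau - t))).
  pose proof (Rle_abs (- (f tau - f t - d * (tau - t)))).
  rewrite Rabs_Ropp in *. lra.
Qed.

Lemma derivable_pt_lim_near f t d r : derivable_pt_lim f t d -> 0 < r ->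
  exists dl, 0 < dl /\ forall tau, Rabs (tau - t) < dl -> Rabs (f tau - f t) < r.
Proof.
  intros Hd Hr. destruct (derivable_pt_lim_bounds f t d Hd 1 Rlt_0_1) as (dl & Hdl & Hb).
  set (K := Rabs d + 1).
  assert (HK : 0 < K) by (unfold K; pose proof (Rabs_pos d); lra).
  exists (Rmin dl (r / K)).
  split; [apply Rmin_glb_lt; [exact Hdl|apply Rdiv_lt_0_compat; lra]|].
  intros tau Htau. pose proof (Rmin_l dl (r / K)). pose proof (Rmin_r dl (r / K)).
  destruct (Hb tau ltac:(lra)) as [Hup Hlow].
  assert (Hsmall : K * Rabs (tau - t) < r).
  { replace r with (K * (r / K)) by (field; lra). apply Rmult_lt_compat_l; lra. }
  pose proof (Rle_abs (d * (tau - t))). pose proof (Rle_abs (- (d * (tau - t)))).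
  rewrite Rabs_Ropp, Rabs_mult in *. unfold K in Hsmall.
  apply Rabs_def1; lra.
Qed.

Definition excess (c z : R) : R := Rmax (z - c) 0.

Lemma excess_nonneg c z : 0 <= excess c z.
Proof. apply Rmax_r. Qed.

Lemma excess_of_le c z : z <= c -> excess c z = 0.
Proof. intros. apply Rmax_right. lra. Qed.

Lemma excess_of_ge c z : c <= z -> excess c z = z - c.
Proof. intros. apply Rmax_left. lra. Qed.

Lemma excess_le c z w : z - c <= w -> 0 <= w -> excess c z <= w.
Proof. apply Rmax_lub. Qed.

Lemma excess_le0 c z : excess c z <= 0 -> z <= c.
Proof. intros H. pose proof (Rmax_l (z - c) 0). unfold excess in H. lra. Qed.

Lemma excess_contraction c p q : Rabs (excess c p - excess c q) <= Rabs (p - q).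
Proof.
  unfold excess, Rmax. destruct (Rle_dec (p - c) 0), (Rle_dec (q - c) 0);
    unfold Rabs; destruct (Rcase_abs _), (Rcase_abs _); lra.
Qed.

(* On the level [y = c], the right Dini derivative of [excess c] along a
   trajectory with speed [d] is [max d 0], the left one is [0]. *)
Definition right_active (c y d : R) : bool :=
  if Rlt_dec c y then true
  else if Rlt_dec y c then false
  else if Rlt_dec 0 d then true else false.

Definition left_active (c y : R) : bool := if Rlt_dec c y then true else false.

Lemma right_active_spec c y d : if right_active c y d then c <= y else y <= c.
Proof.
  unfold right_active.
  destruct (Rlt_dec c y); [lra|]. destruct (Rlt_dec y c); [lra|].
  destruct (Rlt_dec 0 d); lra.
Qed.

Lemma left_active_spec c y : if left_active c y then c <= y else y <= c.
Proof. unfold left_active. destruct (Rlt_dec c y); lra. Qed.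

Lemma excess_right_dini f t d c : derivable_pt_lim f t d -> forall e, 0 < e ->
  exists dl, 0 < dl /\ forall tau, 0 <= tau - t < dl ->
    excess c (f tau) - excess c (f t) <=
    ((if right_active c (f t) d then d else 0) + e) * (tau - t).
Proof.
  intros Hd e He. destruct (derivable_pt_lim_bounds f t d Hd e He) as (dl & Hdl & Hb).
  assert (Hbr : forall tau, 0 <= tau - t < dl -> f tau - f t <= (d + e) * (tau - t)).
  { intros tau Htau. destruct (Hb tau ltac:(rewrite Rabs_right; lra)) as [Hup _].
    rewrite Rabs_right in Hup by lra. lra. }
  unfold right_active. destruct (Rlt_dec c (f t)) as [Habove|Hnabove].
  - destruct (derivable_pt_lim_near f t d (f t - c) Hd) as (dl' & Hdl' & Hnear); [lra|].
    exists (Rmin dl dl'). split; [now apply Rmin_glb_lt|]. intros tau Htau.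
    pose proof (Rmin_l dl dl'). pose proof (Rmin_r dl dl').
    specialize (Hnear tau ltac:(rewrite Rabs_right; lra)). apply Rabs_def2 in Hnear.
    rewrite !excess_of_ge by lra. specialize (Hbr tau ltac:(lra)). lra.
  - destruct (Rlt_dec (f t) c) as [Hbelow|Hnbelow].
    + destruct (derivable_pt_lim_near f t d (c - f t) Hd) as (dl' & Hdl' & Hnear); [lra|].
      exists dl'. split; [exact Hdl'|]. intros tau Htau.
      specialize (Hnear tau ltac:(rewrite Rabs_right; lra)). apply Rabs_def2 in Hnear.
      rewrite !excess_of_le by lra. nra.
    + exists dl. split; [exact Hdl|]. intros tau Htau.
      specialize (Hbr tau Htau). rewrite (excess_of_le c (f t)) by lra.
      destruct (Rlt_dec 0 d); rewrite Rminus_0_r; apply excess_le; nra.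
Qed.

Lemma excess_left_dini f t d c : derivable_pt_lim f t d -> forall e, 0 < e ->
  exists dl, 0 < dl /\ forall tau, 0 <= t - tau < dl ->
    excess c (f t) - excess c (f tau) <=
    ((if left_active c (f t) then d else 0) + e) * (t - tau).
Proof.
  intros Hd e He. unfold left_active. destruct (Rlt_dec c (f t)) as [Habove|Hnabove].
  - destruct (derivable_pt_lim_bounds f t d Hd e He) as (dl & Hdl & Hb).
    destruct (derivable_pt_lim_near f t d (f t - c) Hd) as (dl' & Hdl' & Hnear); [lra|].
    exists (Rmin dl dl'). split; [now apply Rmin_glb_lt|]. intros tau Htau.
    pose proof (Rmin_l dl dl'). pose proof (Rmin_r dl dl').
    specialize (Hnear tau ltac:(rewrite Rabs_left1; lra)). apply Rabs_def2 in Hnear.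
    destruct (Hb tau ltac:(rewrite Rabs_left1; lra)) as [_ Hlow].
    rewrite Rabs_left1 in Hlow by lra.
    rewrite !excess_of_ge by lra. lra.
  - exists 1. split; [lra|]. intros tau Htau.
    rewrite (excess_of_le c (f t)) by lra. pose proof (excess_nonneg c (f tau)). nra.
Qed.

Lemma sumR_rate_bound_with k (F : nat -> R -> R) (r : nat -> R) (h : R -> R) e : 0 < e ->
  (forall i, (1 <= i <= k)%nat -> forall e, 0 < e -> exists dl, 0 < dl /\
     forall tau, 0 <= h tau < dl -> F i tau <= (r i + e) * h tau) ->
  exists dl, 0 < dl /\ forall tau, 0 <= h tau < dl ->
    sumR_upto k (fun i => F i tau) <= (sumR_upto k r + INR k * e) * h tau.
Proof.
  intros He. induction k as [|k IH]; intros HF.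
  - exists 1. split; [lra|]. intros tau Htau. simpl. lra.
  - destruct IH as (dl1 & Hdl1 & Hsum); [intros i Hi; apply HF; lia|].
    destruct (HF (S k) ltac:(lia) e He) as (dl2 & Hdl2 & Hlast).
    exists (Rmin dl1 dl2). split; [now apply Rmin_glb_lt|]. intros tau Htau.
    pose proof (Rmin_l dl1 dl2). pose proof (Rmin_r dl1 dl2).
    specialize (Hsum tau ltac:(lra)). specialize (Hlast tau ltac:(lra)).
    cbn [sumR_upto]. rewrite S_INR.
    replace ((sumR_upto k r + r (S k) + (INR k + 1) * e) * h tau)
      with ((sumR_upto k r + INR k * e) * h tau + (r (S k) + e) * h tau) by ring.
    lra.
Qed.

Lemma sumR_rate_bound k (F : nat -> R -> R) (r : nat -> R) (h : R -> R) :
  (forall i, (1 <= i <= k)%nat -> forall e, 0 < e -> exists dl, 0 < dl /\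
     forall tau, 0 <= h tau < dl -> F i tau <= (r i + e) * h tau) ->
  sumR_upto k r <= 0 ->
  forall eps, 0 < eps -> exists dl, 0 < dl /\
    forall tau, 0 <= h tau < dl -> sumR_upto k (fun i => F i tau) <= eps * h tau.
Proof.
  intros HF Hr eps Heps. pose proof (pos_INR k) as Hk.
  set (e := eps / (INR k + 1)).
  assert (He : 0 < e) by (unfold e; apply Rdiv_lt_0_compat; lra).
  assert (Hke : INR k * e <= eps).
  { assert (e * (INR k + 1) = eps) by (unfold e; field; lra). nra. }
  destruct (sumR_rate_bound_with k F r h e He HF) as (dl & Hdl & Hsum).
  exists dl. split; [exact Hdl|]. intros tau Htau.
  specialize (Hsum tau Htau). nra.
Qed.

Definition total_excess (k : nat) (c : R) (x : nat -> R -> R) (t : R) : R :=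
  sumR_upto k (fun i => excess c (x i t)).

Lemma total_excess_abs_continuous k c x a b :
  (forall i, (1 <= i <= k)%nat -> abs_continuous_on (x i) a b) ->
  abs_continuous_on (total_excess k c x) a b.
Proof.
  unfold total_excess. induction k as [|k IH]; intros Hx; simpl.
  - apply abs_continuous_on_zero.
  - apply abs_continuous_on_plus.
    + apply IH. intros; apply Hx; lia.
    + apply abs_continuous_on_comp_contraction; [apply excess_contraction|apply Hx; lia].
Qed.

Lemma total_excess_dini k c x t d :
  (forall i, (1 <= i <= k)%nat -> derivable_pt_lim (x i) t (d i)) ->
  sumR_upto k (fun i => if right_active c (x i t) (d i) then d i else 0) <= 0 ->
  sumR_upto k (fun i => if left_active c (x i t) then d i else 0) <= 0 ->
  forall eps, 0 < eps -> exists dl, 0 < dl /\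
    (forall tau, t <= tau < t + dl ->
       total_excess k c x tau - total_excess k c x t <= eps * (tau - t)) /\
    (forall tau, t - dl < tau <= t ->
       total_excess k c x t - total_excess k c x tau <= eps * (t - tau)).
Proof.
  intros Hd Hright Hleft eps Heps. unfold total_excess.
  destruct (sumR_rate_bound k (fun i tau => excess c (x i tau) - excess c (x i t))
              (fun i => if right_active c (x i t) (d i) then d i else 0)
              (fun tau => tau - t) (fun i Hi => excess_right_dini _ _ _ c (Hd i Hi))
              Hright eps Heps) as (dl1 & Hdl1 & H1).
  destruct (sumR_rate_bound k (fun i tau => excess c (x i t) - excess c (x i tau))
              (fun i => if left_active c (x i t) then d i else 0)
              (fun tau => t - tau) (fun i Hi => excess_left_dini _ _ _ c (Hd i Hi))
              Hleft eps Heps) as (dl2 & Hdl2 & H2).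
  exists (Rmin dl1 dl2). split; [now apply Rmin_glb_lt|].
  pose proof (Rmin_l dl1 dl2). pose proof (Rmin_r dl1 dl2).
  split; intros tau Htau; rewrite <- sumR_minus; [apply H1 | apply H2]; lra.
Qed.

(** * Flux out of a superlevel set *)

(* Exchanging the roles of [i] and [j] pairs every flux [a i j (z j - z i)]
   leaving a selected agent with its reverse; the pair sums to at most [0]
   unless both agents are selected, when it cancels. *)
Lemma flux_out_of_superlevel_nonpos n (a : nat -> nat -> R) (z : nat -> R)
  (sel : nat -> bool) c :
  (forall i j, (1 <= i <= n)%nat -> (1 <= j <= n)%nat -> a i j = a j i /\ 0 <= a i j) ->
  (forall i, (1 <= i <= n)%nat -> if sel i then c <= z i else z i <= c) ->
  sumR_upto n (fun i => if sel i then sumR_upto n (fun j => a i j * (z j - z i)) else 0)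
  <= 0.
Proof.
  intros Ha Hsel.
  set (D := sumR_upto n (fun i =>
              sumR_upto n (fun j => if sel i then a i j * (z j - z i) else 0))).
  assert (Hswap : D = sumR_upto n (fun i =>
              sumR_upto n (fun j => if sel j then a i j * (z i - z j) else 0))).
  { unfold D. rewrite sumR_swap.
    apply sumR_ext. intros i Hi. apply sumR_ext. intros j Hj.
    now rewrite (proj1 (Ha j i Hj Hi)). }
  assert (Hpairs : D + D <= 0).
  { rewrite Hswap at 2. unfold D. rewrite <- sumR_plus.
    apply sumR_nonpos. intros i Hi. rewrite <- sumR_plus.
    apply sumR_nonpos. intros j Hj.
    destruct (Ha i j Hi Hj) as [_ Hpos].
    pose proof (Hsel i Hi) as Hzi. pose proof (Hsel j Hj) as Hzj.
    destruct (sel i), (sel j); nra. }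
  replace (sumR_upto n _) with D; [lra|].
  apply sumR_ext. intros i _. symmetry. apply sumR_if.
Qed.

Lemma saturated_flux_nonpos N (s : nat -> R) (a : nat -> nat -> R) k (y : nat -> R)
  (sel : nat -> bool) :
  (1 <= k <= N)%nat -> (forall i, (1 <= i < N)%nat -> s (S i) < s i) -> 0 < s N ->
  (forall i j, (1 <= i <= N)%nat -> (1 <= j <= N)%nat -> a i j = a j i /\ 0 <= a i j) ->
  (forall i, (1 <= i <= k)%nat -> if sel i then s k <= y i else y i <= s k) ->
  sumR_upto k (fun i => if sel i then
    sumR_upto N (fun j => a i j * (sat (s j) (y j) - sat (s i) (y i))) else 0) <= 0.
Proof.
  intros Hk Hs HsN Ha Hsel.
  pose proof (decreasing_lt s N Hs) as Hlt.
  assert (Hle : forall i j, (1 <= i <= j)%nat -> (j <= N)%nat -> s j <= s i).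
  { intros i j Hij HjN. destruct (Nat.eq_dec i j) as [->|]; [lra|].
    apply Rlt_le, Hlt; lia. }
  assert (Hpos : forall j, (1 <= j <= N)%nat -> 0 < s j).
  { intros j Hj. pose proof (Hle j N ltac:(lia) ltac:(lia)). lra. }
  rewrite <- (sumR_restrict N k) by lia.
  set (sel' := fun i => andb (sel i) (i <=? k)%nat).
  rewrite (sumR_ext N _ (fun i => if sel' i then
    sumR_upto N (fun j => a i j * (sat (s j) (y j) - sat (s i) (y i))) else 0)).
  2:{ intros i _. unfold sel'. now destruct (sel i), (i <=? k)%nat. }
  apply flux_out_of_superlevel_nonpos with (c := s k) (z := fun j => sat (s j) (y j));
    [exact Ha|].
  intros i Hi. unfold sel'. destruct (Nat.leb_spec i k) as [Hik|Hik].
  - rewrite andb_true_r. specialize (Hsel i ltac:(lia)).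
    pose proof (Hle i k ltac:(lia) ltac:(lia)). pose proof (Hpos k ltac:(lia)).
    destruct (sel i); [apply sat_ge | apply sat_le]; lra.
  - rewrite andb_false_r. pose proof (Hlt k i ltac:(lia) ltac:(lia)).
    pose proof (sat_le_bound (s i) (y i) ltac:(pose proof (Hpos i Hi); lra)). lra.
Qed.

(** * The saturated consensus system *)

Definition flux N (s : nat -> R) (alpha : nat -> nat -> R -> R) (x : nat -> R -> R) i t :=
  sumR_upto N (fun j => alpha i j t * (sat (s j) (x j t) - sat (s i) (x i t))).

Definition ode_fails N s alpha t0 (x : nat -> R -> R) m t : Prop :=
  exists i, (1 <= i <= m)%nat /\ t0 < t /\
    ~ derivable_pt_lim (x i) t (flux N s alpha x i t).

Lemma ode_fails_negligible N s alpha t0 x m : cara_solution N s alpha t0 x ->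
  (m <= N)%nat -> negligible (ode_fails N s alpha t0 x m).
Proof.
  intros Hsol. induction m as [|m IH]; intros Hm.
  - apply (negligible_subset _ _ negligible_empty). intros t (i & Hi & _). lia.
  - destruct (Hsol (S m) ltac:(lia)) as [_ (E & HE & Hder)].
    apply (negligible_subset _ _ (negligible_union _ _ (IH ltac:(lia)) HE)).
    intros t (i & Hi & Ht & Hnd). destruct (Nat.eq_dec i (S m)) as [->|Hne].
    + right. apply NNPP. intros HnE. apply Hnd, Hder; assumption.
    + left. exists i. split; [lia|auto].
Qed.

Lemma total_excess_dini_nonpos N s alpha t0 x k a b :
  (1 <= k <= N)%nat -> (forall i, (1 <= i < N)%nat -> s (S i) < s i) -> 0 < s N ->
  standing_weights N alpha -> 0 <= t0 -> t0 <= a ->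
  dini_nonpos_off (total_excess k (s k) x)
    (fun t => t = a \/ ode_fails N s alpha t0 x k t) a b.
Proof.
  intros Hk Hs HsN Hw Ht0 Ha t Ht Hgood.
  assert (Htt : t0 < t) by (assert (t <> a) by (intros ->; apply Hgood; now left); lra).
  assert (Hder : forall i, (1 <= i <= k)%nat ->
            derivable_pt_lim (x i) t (flux N s alpha x i t)).
  { intros i Hi. apply NNPP. intros Hnd. apply Hgood. right. now exists i. }
  assert (Halpha : forall i j, (1 <= i <= N)%nat -> (1 <= j <= N)%nat ->
            alpha i j t = alpha j i t /\ 0 <= alpha i j t).
  { intros i j Hi Hj. apply (proj1 (Hw i j Hi Hj)). lra. }
  apply total_excess_dini with (d := fun i => flux N s alpha x i t); [exact Hder| |];
    apply (saturated_flux_nonpos N s (fun i j => alpha i j t) k (fun j => x j t));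
    auto; intros i _; [apply right_active_spec | apply left_active_spec].
Qed.

Lemma upper_invariance N s alpha t0 x k tstar :
  (1 <= k <= N)%nat -> (forall i, (1 <= i < N)%nat -> s (S i) < s i) -> 0 < s N ->
  standing_weights N alpha -> 0 <= t0 -> cara_solution N s alpha t0 x -> t0 <= tstar ->
  (forall i, (1 <= i <= k)%nat -> x i tstar <= s k) ->
  forall t, tstar <= t -> forall i, (1 <= i <= k)%nat -> x i t <= s k.
Proof.
  intros Hk Hs HsN Hw Ht0 Hsol Hts Hinit t Ht i Hi.
  assert (Hdecay : total_excess k (s k) x t <= total_excess k (s k) x tstar).
  { apply nonincreasing_of_dini_nonpos
      with (E := fun t => t = tstar \/ ode_fails N s alpha t0 x k t); auto.
    - apply total_excess_abs_continuous. intros j Hj.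
      apply abs_continuous_on_subinterval with t0; [exact Hts|].
      apply (proj1 (Hsol j ltac:(lia))). lra.
    - apply negligible_union; [apply negligible_singleton|].
      apply ode_fails_negligible; [exact Hsol | lia].
    - now apply total_excess_dini_nonpos. }
  assert (Hstart : total_excess k (s k) x tstar = 0).
  { unfold total_excess. rewrite (sumR_ext k _ (fun _ => 0)), sumR_const; [lra|].
    intros j Hj. now apply excess_of_le, Hinit. }
  apply excess_le0.
  pose proof (sumR_term_le k (fun j => excess (s k) (x j t)) i
                (fun j _ => excess_nonneg (s k) (x j t)) Hi).
  unfold total_excess in *. lra.
Qed.

Lemma cara_solution_opp N s alpha t0 x : cara_solution N s alpha t0 x ->
  cara_solution N s alpha t0 (fun i t => - x i t).
Proof.
  intros Hsol i Hi. destruct (Hsol i Hi) as [Hac (E & HE & Hder)]. split.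
  - intros T HT. apply abs_continuous_on_opp, Hac, HT.
  - exists E. split; [exact HE|]. intros t Ht HnE.
    replace (sumR_upto N (fun j => alpha i j t * (sat (s j) (- x j t) - sat (s i) (- x i t))))
      with (- flux N s alpha x i t).
    + apply derivable_pt_lim_opp, Hder; assumption.
    + unfold flux. rewrite <- (Rmult_1_l (sumR_upto _ _)), Ropp_mult_distr_l, <- sumR_scal.
      apply sumR_ext. intros j _. rewrite !sat_opp. ring.
Qed.

Theorem lemma11 (N : nat) (s : nat -> R) (alpha : nat -> nat -> R -> R)
  (t0 : R) (x : nat -> R -> R) (k : nat) (tstar : R) :
  (1 <= N)%nat ->
  (forall i, (1 <= i < N)%nat -> s (S i) < s i) ->
  0 < s N ->
  standing_weights N alpha ->
  0 <= t0 ->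
  cara_solution N s alpha t0 x ->
  (1 <= k <= N)%nat ->
  t0 <= tstar ->
  (forall i, (1 <= i <= k)%nat -> - s k <= x i tstar <= s k) ->
  forall t, tstar <= t ->
    forall i, (1 <= i <= k)%nat -> - s k <= x i t <= s k.
Proof.
  intros _ Hs HsN Hw Ht0 Hsol Hk Hts Hinit t Ht i Hi. split.
  - enough (- x i t <= s k) by lra.
    apply (upper_invariance N s alpha t0 (fun j t => - x j t) k tstar);
      auto using cara_solution_opp.
    intros j Hj. specialize (Hinit j Hj). lra.
  - apply (upper_invariance N s alpha t0 x k tstar); auto.
    intros j Hj. apply Hinit, Hj.
Qed.
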